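(* On $\hat N^{\bullet}_*=\bigcup_{n\ge1}\hat N^n$, with $+_{\nearrow}:=\nearrow$ and $+_{\nwarrow}:=\nwarrow$, the operation $\tilde\ltimes$ and the involution $\dagger$: (i) $\tilde\ltimes$ maps $\hat N^n\times\hat N^m$ into $\hat N^{nm}$, is associative, and is left distributive: $(\vec u+_{\nearrow}\vec v)\tilde\ltimes\vec w=(\vec u\tilde\ltimes\vec w)+_{\nearrow}(\vec v\tilde\ltimes\vec w)$ and $(\vec u+_{\nwarrow}\vec v)\tilde\ltimes\vec w=(\vec u\tilde\ltimes\vec w)+_{\nwarrow}(\vec v\tilde\ltimes\vec w)$; (ii) for all names $\vec u,\vec v$: $(\vec u+_{\nearrow}\vec v)^\dagger=\vec v^\dagger+_{\nwarrow}\vec u^\dagger$, $(\vec u+_{\nwarrow}\vec v)^\dagger=\vec v^\dagger+_{\nearrow}\vec u^\dagger$, and $(\vec u\tilde\ltimes\vec v)^\dagger=\vec u^\dagger\tilde\ltimes\vec v^\dagger$.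
   Context: $\hat N^n$ ($n\ge1$) is the set of names of planar rooted binary trees with $n$ internal vertices and $\hat N^0=\{()\}$ (the empty vector, name of the trivial tree). Equivalently, recursively: every element of $\hat N^n$, $n\ge1$, is uniquely of the form $\vec v_l\vee\vec v_r:=(\vec v_l,1,p+1+\vec v_r)$ with $\vec v_l\in\hat N^p$, $\vec v_r\in\hat N^q$, $p+q+1=n$, where $k+(w_1,\dots,w_q)=(w_1+k,\dots,w_q+k)$. For $\vec v\in\hat N^n,\vec w\in\hat N^m$: $\vec v\nearrow\vec w=(\vec v,n\triangleright w_1,\dots,n\triangleright w_m)$ with $n\triangleright a=a+n$ for $a\ne1$, $n\triangleright1=1$; $\vec v\nwarrow\vec w=(\vec v,n+\vec w)$; the empty vector $()$ is a two-sided unit for both. These satisfy $\vec v_l\vee\vec v_r=\vec v_l\nearrow(1)\nwarrow\vec v_r$. Universal expression: for a name $\vec v$ and a name $\vec x$ of degree $\ge1$, $\varpi_{()}(\vec x)=()$ and $\varpi_{\vec v}(\vec x)=\varpi_{\vec v_l}(\vec x)\nearrow\vec x\nwarrow\varpi_{\vec v_r}(\vec x)$ for $\vec v=\vec v_l\vee\vec v_r$. $L$-multiplication: $\vec u\tilde\ltimes\vec v:=\varpi_{\vec u}(\vec v)$. Dendriform involution: $()^\dagger=()$ and $(\vec v\vee\vec w)^\dagger=\vec w^\dagger\vee\vec v^\dagger$. *)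

From mathcomp Require Import all_boot.
Set Implicit Arguments. Unset Strict Implicit. Unset Printing Implicit Defensive.

Definition shift (k : nat) (w : seq nat) : seq nat := map (addn k) w.

Definition vee (vl vr : seq nat) : seq nat := vl ++ 1 :: shift (size vl).+1 vr.

(* \hat N^n : names of planar rooted binary trees with n internal vertices;
   is_name v holds iff v is in \hat N^(size v). *)
Inductive is_name : seq nat -> Prop :=
| is_name_nil : is_name [::]
| is_name_vee vl vr : is_name vl -> is_name vr -> is_name (vee vl vr).

Definition hatN (n : nat) (v : seq nat) : Prop := is_name v /\ size v = n.

Definition tri (n a : nat) : nat := if a == 1 then 1 else a + n.

Definition nearrow (v w : seq nat) : seq nat := v ++ map (tri (size v)) w.
Definition nwarrow (v w : seq nat) : seq nat := v ++ shift (size v) w.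

(* Decomposition v = v_l \vee v_r of a nonempty name: the 1 separating v_l
   from p+1+v_r is the last entry equal to 1 (entries of p+1+v_r are >= p+2). *)
Definition split_pos (v : seq nat) : nat := (size v).-1 - index 1 (rev v).
Definition lpart (v : seq nat) : seq nat := take (split_pos v) v.
Definition rpart (v : seq nat) : seq nat :=
  map (fun a => a - (split_pos v).+1) (drop (split_pos v).+1 v).

Fixpoint varpi_rec (k : nat) (v x : seq nat) : seq nat :=
  match k with
  | 0 => [::]
  | k'.+1 => if nilp v then [::]
             else nwarrow (nearrow (varpi_rec k' (lpart v) x) x)
                          (varpi_rec k' (rpart v) x)
  end.
Definition varpi (v x : seq nat) : seq nat := varpi_rec (size v) v x.

Definition ltimes (u v : seq nat) : seq nat := varpi u v.

Fixpoint dagger_rec (k : nat) (v : seq nat) : seq nat :=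
  match k with
  | 0 => [::]
  | k'.+1 => if nilp v then [::]
             else vee (dagger_rec k' (rpart v)) (dagger_rec k' (lpart v))
  end.
Definition dagger (v : seq nat) : seq nat := dagger_rec (size v) v.

(** On names, [lpart] and [rpart] invert [vee], so [varpi] and [dagger] obey
    their recursive equations along [vee].  Every claim is then an induction
    on the binary tree of one argument, using [vee l r = (l ↗ (1)) ↖ r] and the
    associativity of [↗], of [↖] and the mixed law [(u ↗ v) ↖ w = u ↗ (v ↖ w)]
    (for nonempty v); these hold whenever [w] has no entry 0, which is true of
    all names.  Left distributivity gives associativity of [~ltimes], and
    [dagger] exchanges [↗] and [↖] because it mirrors trees. *)
From mathcomp Require Import all_boot zify.

Set Implicit Arguments.
Unset Strict Implicit.
Unset Printing Implicit Defensive.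

Lemma shift0 w : shift 0 w = w.
Proof. by rewrite /shift (eq_map (g := id)) ?map_id. Qed.

Lemma nearrow0 v : nearrow v [::] = v.
Proof. by rewrite /nearrow cats0. Qed.

Lemma nwarrow0l w : nwarrow [::] w = w.
Proof. by rewrite /nwarrow shift0. Qed.

Lemma size_vee l r : size (vee l r) = (size l + size r).+1.
Proof. by rewrite /vee size_cat /= size_map addnS. Qed.

Lemma size_nearrow v w : size (nearrow v w) = size v + size w.
Proof. by rewrite /nearrow size_cat size_map. Qed.

Lemma size_nwarrow v w : size (nwarrow v w) = size v + size w.
Proof. by rewrite /nwarrow size_cat size_map. Qed.

Lemma name_gt0 v : is_name v -> all (leq 1) v.
Proof.
elim=> // l r _ pos_l _ _; rewrite /vee all_cat pos_l /= all_map.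
by apply/allP => y _ /=; rewrite addSn.
Qed.

Lemma nearrow_veer v l r : all (leq 1) r ->
  nearrow v (vee l r) = vee (nearrow v l) r.
Proof.
move=> /allP pos_r; rewrite /nearrow /vee map_cat -catA size_cat size_map /=.
congr (_ ++ _ ++ _ :: _); rewrite /shift -map_comp; apply/eq_in_map => y /pos_r /=.
rewrite /tri; case: eqP; lia.
Qed.

Lemma nwarrow_veel l r w : nwarrow (vee l r) w = vee l (nwarrow r w).
Proof.
rewrite /nwarrow /vee -catA size_cat /= size_map /shift map_cat -map_comp.
by congr (_ ++ _ :: _ ++ _); apply: eq_map => y /=; lia.
Qed.

Lemma nearrowA u v w : all (leq 1) w ->
  nearrow (nearrow u v) w = nearrow u (nearrow v w).
Proof.
move=> /allP pos_w; rewrite /nearrow -catA map_cat size_cat size_map -map_comp.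
congr (_ ++ _ ++ _); apply/eq_in_map => y /pos_w /=.
rewrite /tri; case: eqP; case: eqP; lia.
Qed.

Lemma nwarrowA u v w : nwarrow (nwarrow u v) w = nwarrow u (nwarrow v w).
Proof.
rewrite /nwarrow -catA /shift map_cat size_cat size_map -map_comp.
by congr (_ ++ _ ++ _); apply: eq_map => y /=; lia.
Qed.

Lemma nearrow_nwarrowA u v w : 0 < size v -> all (leq 1) w ->
  nwarrow (nearrow u v) w = nearrow u (nwarrow v w).
Proof.
move=> v_gt0 /allP pos_w; rewrite /nwarrow /nearrow -catA /shift map_cat.
rewrite size_cat size_map -map_comp.
congr (_ ++ _ ++ _); apply/eq_in_map => y /pos_w /=.
rewrite /tri; case: eqP; lia.
Qed.

Section VeeDecomposition.

Variables l r : seq nat.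
Hypothesis pos_r : all (leq 1) r.

(* The entries of [shift (size l).+1 r] exceed 1, so the root of [vee l r]
   is its last entry 1. *)
Lemma split_pos_vee : split_pos (vee l r) = size l.
Proof.
rewrite /split_pos size_vee /vee rev_cat rev_cons cat_rcons index_cat mem_rev.
have -> : (1 \in shift (size l).+1 r) = false.
  by apply/mapP => -[y /(allP pos_r) /= y_gt0]; lia.
rewrite /= size_rev size_map addn0; lia.
Qed.

Lemma lpart_vee : lpart (vee l r) = l.
Proof. by rewrite /lpart split_pos_vee /vee take_size_cat. Qed.

Lemma rpart_vee : rpart (vee l r) = r.
Proof.
rewrite /rpart split_pos_vee /vee drop_cat ltnNge leqnSn /= subSnn /= drop0.
by rewrite /shift -map_comp (eq_map (g := id)) ?map_id // => y /=; lia.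
Qed.

End VeeDecomposition.

Section NameRecursion.

Variable G : seq nat -> seq nat -> seq nat.
Variable F : nat -> seq nat -> seq nat.
Hypothesis F0 : forall v, F 0 v = [::].
Hypothesis FS : forall k v,
  F k.+1 v = if nilp v then [::] else G (F k (lpart v)) (F k (rpart v)).

Lemma name_rec_fuel v k : is_name v -> size v <= k -> F k v = F (size v) v.
Proof.
move=> name_v; elim: name_v k => [|l r name_l IHl name_r IHr] k.
  by case: k => [|k] //= _; rewrite FS F0.
rewrite size_vee; case: k => // k le_lr_k; rewrite !FS /nilp size_vee /=.
rewrite lpart_vee ?rpart_vee ?name_gt0 //.
by rewrite IHl ?IHr ?(IHl (size l + size r)) ?(IHr (size l + size r)) //; lia.
Qed.

Lemma name_rec_vee l r : is_name l -> is_name r ->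
  F (size (vee l r)) (vee l r) = G (F (size l) l) (F (size r) r).
Proof.
move=> name_l name_r; rewrite size_vee FS /nilp size_vee /=.
rewrite lpart_vee ?rpart_vee ?name_gt0 //.
by rewrite !name_rec_fuel // ?leq_addr ?leq_addl.
Qed.

End NameRecursion.

Lemma varpi_vee l r x : is_name l -> is_name r ->
  varpi (vee l r) x = nwarrow (nearrow (varpi l x) x) (varpi r x).
Proof.
exact: (@name_rec_vee (fun a b => nwarrow (nearrow a x) b)
  (fun k v => varpi_rec k v x) (fun _ => erefl) (fun _ _ => erefl)).
Qed.

Lemma dagger_vee l r : is_name l -> is_name r ->
  dagger (vee l r) = vee (dagger r) (dagger l).
Proof.
exact: (@name_rec_vee (fun a b => vee b a) dagger_rec
  (fun _ => erefl) (fun _ _ => erefl)).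
Qed.

Lemma name_nearrow u v : is_name u -> is_name v -> is_name (nearrow u v).
Proof.
move=> name_u; elim=> [|l r name_l IHl name_r _]; first by rewrite nearrow0.
by rewrite nearrow_veer ?name_gt0 //; constructor.
Qed.

Lemma name_nwarrow u v : is_name u -> is_name v -> is_name (nwarrow u v).
Proof.
move=> name_u name_v; elim: name_u => [|l r name_l _ name_r IHr].
  by rewrite nwarrow0l.
by rewrite nwarrow_veel; constructor.
Qed.

Lemma name_varpi u x : is_name u -> is_name x -> is_name (varpi u x).
Proof.
move=> name_u name_x; elim: name_u => [|l r name_l IHl name_r IHr].
  exact: is_name_nil.
by rewrite varpi_vee //; apply: name_nwarrow => //; apply: name_nearrow.
Qed.

Lemma size_varpi u x : is_name u -> size (varpi u x) = size u * size x.
Proof.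
elim=> [|l r name_l IHl name_r IHr] //.
by rewrite varpi_vee // size_nwarrow size_nearrow IHl IHr size_vee; lia.
Qed.

Lemma hatN_varpi n m u x : hatN n u -> hatN m x -> hatN (n * m) (varpi u x).
Proof.
by move=> [name_u <-] [name_x <-]; split; [apply: name_varpi | apply: size_varpi].
Qed.

Lemma name_dagger v : is_name v -> is_name (dagger v).
Proof.
elim=> [|l r name_l IHl name_r IHr]; first exact: is_name_nil.
by rewrite dagger_vee //; constructor.
Qed.

Lemma size_dagger v : is_name v -> size (dagger v) = size v.
Proof.
elim=> [|l r name_l IHl name_r IHr] //.
by rewrite dagger_vee // !size_vee IHl IHr addnC.
Qed.

#[local] Hint Resolve name_gt0 name_nearrow name_nwarrow name_varpi name_dagger : core.

Section Distributivity.

Variable x : seq nat.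
Hypotheses (name_x : is_name x) (x_gt0 : 0 < size x).

Lemma varpi_nearrow u v : is_name u -> is_name v ->
  varpi (nearrow u v) x = nearrow (varpi u x) (varpi v x).
Proof.
move=> name_u; elim=> [|l r name_l IHl name_r _]; first by rewrite !nearrow0.
have nearrow_x_gt0 w : 0 < size (nearrow w x).
  by rewrite size_nearrow addn_gt0 x_gt0 orbT.
rewrite nearrow_veer ?name_gt0 // (varpi_vee x (name_nearrow name_u name_l) name_r).
rewrite varpi_vee // IHl nearrowA ?name_gt0 //.
by rewrite (nearrow_nwarrowA _ (nearrow_x_gt0 _)); auto.
Qed.

Lemma varpi_nwarrow u v : is_name u -> is_name v ->
  varpi (nwarrow u v) x = nwarrow (varpi u x) (varpi v x).
Proof.
move=> name_u name_v; elim: name_u => [|l r name_l _ name_r IHr].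
  by rewrite !nwarrow0l.
rewrite nwarrow_veel (varpi_vee x name_l (name_nwarrow name_r name_v)).
by rewrite IHr varpi_vee // nwarrowA.
Qed.

End Distributivity.

Lemma varpiA u v w : is_name u -> is_name v -> is_name w -> 0 < size w ->
  varpi (varpi u v) w = varpi u (varpi v w).
Proof.
move=> name_u name_v name_w w_gt0; elim: name_u => [|l r name_l IHl name_r IHr] //.
rewrite !varpi_vee // varpi_nwarrow ?varpi_nearrow //; auto.
by rewrite IHl IHr.
Qed.

Lemma dagger_nearrow u v : is_name u -> is_name v ->
  dagger (nearrow u v) = nwarrow (dagger v) (dagger u).
Proof.
move=> name_u; elim=> [|l r name_l IHl name_r _].
  by rewrite nearrow0 nwarrow0l.
rewrite nearrow_veer ?name_gt0 // (dagger_vee (name_nearrow name_u name_l) name_r).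
by rewrite IHl dagger_vee // nwarrow_veel.
Qed.

Lemma dagger_nwarrow u v : is_name u -> is_name v ->
  dagger (nwarrow u v) = nearrow (dagger v) (dagger u).
Proof.
move=> name_u name_v; elim: name_u => [|l r name_l _ name_r IHr].
  by rewrite nwarrow0l nearrow0.
rewrite nwarrow_veel (dagger_vee name_l (name_nwarrow name_r name_v)).
by rewrite IHr dagger_vee // nearrow_veer; auto.
Qed.

Lemma dagger_varpi u x : is_name u -> is_name x -> 0 < size x ->
  dagger (varpi u x) = varpi (dagger u) (dagger x).
Proof.
move=> name_u name_x x_gt0; elim: name_u => [|l r name_l IHl name_r IHr] //.
rewrite varpi_vee // dagger_nwarrow ?dagger_nearrow //; auto.
rewrite IHl IHr dagger_vee //.
by rewrite varpi_vee ?nearrow_nwarrowA ?size_dagger; auto.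
Qed.

Theorem mainTheorem8 :
  (forall (n m : nat) (u v : seq nat), 1 <= n -> 1 <= m ->
      hatN n u -> hatN m v -> hatN (n * m) (ltimes u v)) /\
  (forall u v w : seq nat,
      is_name u -> is_name v -> is_name w ->
      0 < size u -> 0 < size v -> 0 < size w ->
      ltimes (ltimes u v) w = ltimes u (ltimes v w)) /\
  (forall u v w : seq nat,
      is_name u -> is_name v -> is_name w ->
      0 < size u -> 0 < size v -> 0 < size w ->
      ltimes (nearrow u v) w = nearrow (ltimes u w) (ltimes v w) /\
      ltimes (nwarrow u v) w = nwarrow (ltimes u w) (ltimes v w)) /\
  (forall u v : seq nat, is_name u -> is_name v ->
      dagger (nearrow u v) = nwarrow (dagger v) (dagger u) /\
      dagger (nwarrow u v) = nearrow (dagger v) (dagger u)) /\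
  (forall u v : seq nat, is_name u -> is_name v -> 0 < size v ->
      dagger (ltimes u v) = ltimes (dagger u) (dagger v)).
Proof.
split; first by move=> n m u v _ _; apply: hatN_varpi.
split; first by move=> u v w name_u name_v name_w _ _; apply: varpiA.
split.
  move=> u v w name_u name_v name_w _ _ w_gt0.
  by split; [apply: varpi_nearrow | apply: varpi_nwarrow].
split; first by move=> u v name_u name_v; split;
  [apply: dagger_nearrow | apply: dagger_nwarrow].
exact: dagger_varpi.
Qed.
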